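(* Let $d_v\in\{2,3\}$, $L>0$, and consider $n$ particles with positions $x_p\in[0,L)$ (periodic), velocities $v_p\in\mathbb{R}^{d_v}$ and weights $w_p>0$, $p=1,\dots,n$. Let $s:[0,L)\times\mathbb{R}^{d_v}\to\mathbb{R}^{d_v}$ be an arbitrary function (a score approximation), let $\psi_\eta$ be a symmetric nonnegative spatial kernel, and define for each $p$ \[ U^\eta(x_p,v_p) = \sum_{q=1}^n w_q\,\psi_\eta(x_p-x_q)\,A(v_p-v_q)\big[s(x_p,v_p) - s(x_q,v_q)\big], \] where $A(z) = |z|^{\gamma+2}\big(I_{d_v} - zz^\top/|z|^2\big)$. Then, for any $\nu\ge 0$: (i) (conservation of momentum and energy) \[ \sum_p w_p\,U^\eta(x_p,v_p) = 0,\qquad \sum_p w_p\, v_p\cdot U^\eta(x_p,v_p) = 0; \] (ii) (estimated entropy dissipation) \[ -\nu\sum_p w_p\, s(x_p,v_p)\cdot U^\eta(x_p,v_p) \le 0. \]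
   Context: $\gamma$ is a real exponent (the Coulomb case is $\gamma=-d_v$). Terms with $v_p=v_q$ in the sum defining $U^\eta$ are taken to be zero (where $A(0)$ is undefined). The kernel $\psi_\eta$ is evaluated on periodic differences of positions and satisfies $\psi_\eta(y)=\psi_\eta(-y)\ge 0$; a typical choice is the hat function $\psi_\eta(x)=\frac1\eta\big(1-\frac{|x|}{\eta}\big)_+$ with $\eta=L/M$. *)

From HB Require Import structures.
From mathcomp Require Import all_boot all_order all_algebra.
From mathcomp Require Import reals exp.
Set Implicit Arguments. Unset Strict Implicit. Unset Printing Implicit Defensive.
Import Order.TTheory GRing.Theory Num.Theory.
Local Open Scope ring_scope.

Definition dotv (R : realType) (d : nat) (u v : 'cV[R]_d) : R :=
  \sum_(i < d) u i 0 * v i 0.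

Definition vnorm (R : realType) (d : nat) (z : 'cV[R]_d) : R :=
  Num.sqrt (dotv z z).

(* Landau-type collision matrix A(z) = |z|^(gamma+2) (I - z z^T / |z|^2),
   meaningful for z <> 0. *)
Definition Amat (R : realType) (d : nat) (gamma : R) (z : 'cV[R]_d) : 'M[R]_d :=
  powR (vnorm z) (gamma + 2) *: (1%:M - (vnorm z ^- 2) *: (z *m z^T)).

Definition Ueta (R : realType) (d n : nat) (gamma : R) (psi : R -> R)
  (s : R -> 'cV[R]_d -> 'cV[R]_d)
  (x : 'I_n -> R) (v : 'I_n -> 'cV[R]_d) (w : 'I_n -> R) (p : 'I_n) : 'cV[R]_d :=
  \sum_(q < n)
    (if v p == v q then 0
     else (w q * psi (x p - x q)) *:
            (Amat gamma (v p - v q) *m (s (x p) (v p) - s (x q) (v q)))).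

From HB Require Import structures.
From mathcomp Require Import all_boot all_order all_algebra.
From mathcomp Require Import reals exp.
Set Implicit Arguments. Unset Strict Implicit. Unset Printing Implicit Defensive.
Import Order.TTheory GRing.Theory Num.Theory.
Local Open Scope ring_scope.

(* Write U_p for U^eta(x_p, v_p).  The weighted double sum behind
   sum_p w_p U_p is made of pair fluxes F_pq = c_pq A(v_p - v_q)(s_p - s_q)
   whose coefficient c_pq = w_p w_q psi(x_p - x_q) is symmetric, so F_qp = -F_pq
   because A(-z) = A(z).  Summing over ordered pairs therefore gives
   sum_p w_p U_p = 0 and, for any family f_p,
   2 sum_p w_p f_p . U_p = sum_pq (f_p - f_q) . F_pq.
   With f = v every term vanishes because A(z) z = 0 and A(z) is symmetric;
   with f = s every term is c_pq times a quadratic form of the positive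
   semidefinite matrix A(v_p - v_q), hence nonnegative. *)

Section DotProduct.
Variables (R : realType) (d : nat).
Implicit Types (u v z : 'cV[R]_d).

Lemma dotvC u v : dotv u v = dotv v u.
Proof. by apply: eq_bigr => i _; rewrite mulrC. Qed.

Lemma dotv_is_linear u : linear_for *%R (dotv u).
Proof.
move=> a v1 v2; rewrite /dotv mulr_sumr -big_split.
by apply: eq_bigr => i _; rewrite !mxE mulrDr mulrCA.
Qed.

HB.instance Definition _ u :=
  GRing.isLinear.Build R 'cV[R]_d R *%R (dotv u) (dotv_is_linear u).

Lemma dotvBl u1 u2 v : dotv (u1 - u2) v = dotv u1 v - dotv u2 v.
Proof. by rewrite dotvC raddfB /= !(dotvC v). Qed.

Lemma dotv0l v : dotv 0 v = 0.
Proof. by rewrite dotvC raddf0. Qed.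

Lemma dotvv_ge0 u : 0 <= dotv u u.
Proof. by apply: sumr_ge0 => i _; rewrite -expr2 sqr_ge0. Qed.

Lemma dotvv_eq0 u : (dotv u u == 0) = (u == 0).
Proof.
apply/idP/eqP => [/eqP uu0|->]; last by rewrite dotv0l.
apply/matrixP => i j; rewrite (ord1 j) mxE; apply/eqP.
rewrite -[_ == 0]orbb -mulf_eq0; apply/eqP; move: uu0 i isT.
by apply: psumr_eq0P => k _; rewrite -expr2 sqr_ge0.
Qed.

Lemma vnorm_sqr z : vnorm z ^+ 2 = dotv z z.
Proof. by rewrite sqr_sqrtr // dotvv_ge0. Qed.

Lemma vnormN z : vnorm (- z) = vnorm z.
Proof. by rewrite /vnorm raddfN /= dotvC raddfN opprK. Qed.

Lemma mulmx_outer z u : z *m z^T *m u = dotv z u *: z.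
Proof.
apply/matrixP => i j; rewrite (ord1 j) -mulmxA !mxE big_ord1 mxE mulrC.
by congr (_ * _); apply: eq_bigr => k _; rewrite mxE.
Qed.

Lemma dotv_rejection z u : dotv z (u - (dotv z u / dotv z z) *: z) = 0.
Proof.
have [->|z0] := eqVneq z 0; first exact: dotv0l.
by rewrite raddfB /= linearZ /= mulfVK ?subrr // dotvv_eq0.
Qed.

End DotProduct.

Section CollisionMatrix.
Variables (R : realType) (d : nat) (gamma : R).
Implicit Types (u z : 'cV[R]_d).

Lemma Amat_mulmx z u : Amat gamma z *m u =
  powR (vnorm z) (gamma + 2) *: (u - (dotv z u / dotv z z) *: z).
Proof.
rewrite /Amat -scalemxAl mulmxBl mul1mx -scalemxAl mulmx_outer scalerA.
by rewrite vnorm_sqr mulrC.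
Qed.

Lemma Amat_orth z u : dotv z (Amat gamma z *m u) = 0.
Proof. by rewrite Amat_mulmx linearZ /= dotv_rejection mulr0. Qed.

Lemma Amat_psd z u : 0 <= dotv u (Amat gamma z *m u).
Proof.
rewrite Amat_mulmx linearZ /= mulr_ge0 ?powR_ge0 //.
set t := dotv z u / dotv z z; set r := u - t *: z.
have r_orth : dotv z r = 0 := dotv_rejection z u.
suff -> : dotv u r = dotv r r by exact: dotvv_ge0.
rewrite -[in LHS](subrK (t *: z) u) -/r dotvC raddfD /= linearZ /=.
by rewrite (dotvC r z) r_orth mulr0 addr0.
Qed.

Lemma AmatN z : Amat gamma (- z) = Amat gamma z.
Proof.
rewrite /Amat vnormN; congr (_ *: (_ - _ *: _)).
by rewrite linearN /= mulNmx mulmxN opprK.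
Qed.

End CollisionMatrix.

Lemma double_sum_symmetrize (V : nmodType) n (G : 'I_n -> 'I_n -> V) :
  (\sum_(p < n) \sum_(q < n) G p q) *+ 2 =
  \sum_(p < n) \sum_(q < n) (G p q + G q p).
Proof.
rewrite mulr2n {2}exchange_big /= -big_split /=.
by apply: eq_bigr => p _; rewrite -big_split.
Qed.

Lemma double_sum_antisym_eq0 (R : numFieldType) (V : lmodType R) n
    (G : 'I_n -> 'I_n -> V) :
  (forall p q, G q p = - G p q) -> \sum_(p < n) \sum_(q < n) G p q = 0.
Proof.
move=> Ganti; have /eqP : 2%:R *: \sum_(p < n) \sum_(q < n) G p q = 0.
  rewrite scaler_nat double_sum_symmetrize.
  by apply: big1 => p _; apply: big1 => q _; rewrite Ganti addNr.
by rewrite scaler_eq0 pnatr_eq0 => /eqP.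
Qed.

Section ParticleCollisions.
Variables (R : realType) (d n : nat) (gamma : R) (psi : R -> R).
Variable s : R -> 'cV[R]_d -> 'cV[R]_d.
Variables (x : 'I_n -> R) (v : 'I_n -> 'cV[R]_d) (w : 'I_n -> R).
Hypothesis psiN : forall y, psi y = psi (- y).

Let U := Ueta gamma psi s x v w.
Let S p := s (x p) (v p).

Definition collision_weight p q :=
  if v p == v q then 0 else w p * w q * psi (x p - x q).

Definition pair_flux p q :=
  collision_weight p q *: (Amat gamma (v p - v q) *m (S p - S q)).

Lemma collision_weightC p q : collision_weight q p = collision_weight p q.
Proof. by rewrite /collision_weight eq_sym psiN opprB (mulrC (w q)). Qed.

Lemma collision_weight_ge0 p q :
  (forall p, 0 <= w p) -> (forall y, 0 <= psi y) -> 0 <= collision_weight p q.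
Proof. by move=> w_ge0 psi_ge0; rewrite /collision_weight; case: ifP => // _; rewrite !mulr_ge0. Qed.

Lemma pair_flux_antisym p q : pair_flux q p = - pair_flux p q.
Proof.
by rewrite /pair_flux collision_weightC -opprB AmatN -(opprB (S p)) mulmxN scalerN.
Qed.

Lemma scale_Ueta p : w p *: U p = \sum_(q < n) pair_flux p q.
Proof.
rewrite scaler_sumr; apply: eq_bigr => q _.
by rewrite /pair_flux /collision_weight; case: ifP; rewrite ?scaler0 ?scale0r // scalerA mulrA.
Qed.

Lemma sum_scale_Ueta : \sum_(p < n) w p *: U p = 0.
Proof.
under eq_bigr do rewrite scale_Ueta.
exact: double_sum_antisym_eq0 pair_flux_antisym.
Qed.

Lemma sum_dotv_Ueta_symmetrize (f : 'I_n -> 'cV[R]_d) :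
  (\sum_(p < n) w p * dotv (f p) (U p)) *+ 2 =
  \sum_(p < n) \sum_(q < n) dotv (f p - f q) (pair_flux p q).
Proof.
under eq_bigr do rewrite -linearZ /= scale_Ueta raddf_sum.
rewrite double_sum_symmetrize; apply: eq_bigr => p _; apply: eq_bigr => q _.
by rewrite (pair_flux_antisym p q) raddfN /= dotvBl.
Qed.

Lemma sum_dotv_Ueta_velocity : \sum_(p < n) w p * dotv (v p) (U p) = 0.
Proof.
have pairs_vanish : \sum_(p < n) \sum_(q < n) dotv (v p - v q) (pair_flux p q) = 0.
  by apply: big1 => p _; apply: big1 => q _; rewrite linearZ /= Amat_orth mulr0.
by move/eqP: (sum_dotv_Ueta_symmetrize v); rewrite pairs_vanish mulrn_eq0 => /eqP.
Qed.

Lemma sum_dotv_Ueta_score_ge0 :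
  (forall p, 0 <= w p) -> (forall y, 0 <= psi y) ->
  0 <= \sum_(p < n) w p * dotv (S p) (U p).
Proof.
move=> w_ge0 psi_ge0; rewrite -(pmulrn_lge0 _ (n := 2)) //.
rewrite sum_dotv_Ueta_symmetrize; apply: sumr_ge0 => p _; apply: sumr_ge0 => q _.
by rewrite linearZ /=; apply: mulr_ge0; [exact: collision_weight_ge0 | exact: Amat_psd].
Qed.

End ParticleCollisions.

Theorem theorem3 (R : realType) (dv n : nat) (L gamma nu : R)
  (psi : R -> R) (s : R -> 'cV[R]_dv -> 'cV[R]_dv)
  (x : 'I_n -> R) (v : 'I_n -> 'cV[R]_dv) (w : 'I_n -> R) :
  (dv = 2%N \/ dv = 3%N) ->
  0 < L ->
  (forall p, 0 <= x p < L) ->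
  (forall p, 0 < w p) ->
  (forall y, psi y = psi (- y)) ->
  (forall y, 0 <= psi y) ->
  0 <= nu ->
  [/\ \sum_(p < n) w p *: Ueta gamma psi s x v w p = 0,
      \sum_(p < n) w p * dotv (v p) (Ueta gamma psi s x v w p) = 0 &
      - nu * (\sum_(p < n) w p * dotv (s (x p) (v p)) (Ueta gamma psi s x v w p)) <= 0].
Proof.
move=> _ _ _ w_gt0 psiN psi_ge0 nu_ge0; split.
- exact: sum_scale_Ueta.
- exact: sum_dotv_Ueta_velocity.
- rewrite mulNr oppr_le0 mulr_ge0 //.
  by apply: sum_dotv_Ueta_score_ge0 => // p; apply: ltW.
Qed.
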